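(* Let $n\ge1$. The matrix $D^n$ is positive semi-definite. For $j,k\in\{0,\dots,2^n-1\}$: $D^n_{jk}=0$ if $j,k$ have different parity; if $j,k$ have the same parity then $D^n_{jk}=1/2^n$ when $c_n(j)\equiv c_n(k)\pmod 4$ and $D^n_{jk}=-1/2^n$ when $c_n(j)\not\equiv c_n(k)\pmod 4$. Moreover $\sum_{j,k}D^n_{jk}=1$.
   Context: For $n\ge1$, an $n$-path is a string $\alpha_0\alpha_1\cdots\alpha_n$ with $\alpha_k\in\{0,1\}$, $\alpha_0=0$; the set $\Omega_n$ of $n$-paths is identified with $\{0,1,\dots,2^n-1\}$, the path $\omega_j$ (or simply $j$) being the one whose string $\alpha_0\cdots\alpha_n$ is the binary representation of $j$ (with $\alpha_n$ least significant). $D^n$ is the $2^n\times2^n$ matrix with entries $D^n_{jk}=D^n(\omega_j,\omega_k)$, where for $\omega=\alpha_0\cdots\alpha_n$, $\omega'=\alpha'_0\cdots\alpha'_n$, $D^n(\omega,\omega')=2^{-n}\prod_{k=1}^n i^{|\alpha_k-\alpha_{k-1}|}\prod_{k=1}^n i^{-|\alpha'_k-\alpha'_{k-1}|}\,\delta_{\alpha_n\alpha'_n}$ ($i=\sqrt{-1}$). $c_n(j)$ denotes the number of position changes of the path $\omega_j$, i.e. the number of $k\in\{1,\dots,n\}$ with $\alpha_k\ne\alpha_{k-1}$. *)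

From HB Require Import structures.
From mathcomp Require Import all_boot all_order all_algebra.
From mathcomp Require Import algC.
Set Implicit Arguments. Unset Strict Implicit. Unset Printing Implicit Defensive.
Import Order.TTheory GRing.Theory Num.Theory.
Local Open Scope ring_scope.

(* The path omega_j, j < 2^n, is alpha_0 ... alpha_n = binary expansion of j,
   alpha_n least significant: alpha_k = bit (n-k) of j. *)
Definition alpha (n j k : nat) : bool := odd (j %/ 2 ^ (n - k)).

Definition cn (n j : nat) : nat :=
  (\sum_(1 <= k < n.+1) (alpha n j k != alpha n j k.-1 : nat))%N.

Definition Dmx (n : nat) : 'M[algC]_(2 ^ n) :=
  \matrix_(j < 2 ^ n, k < 2 ^ n)
    ((2 ^+ n)^-1
     * (\prod_(1 <= m < n.+1) 'i ^+ (alpha n j m != alpha n j m.-1))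
     * (\prod_(1 <= m < n.+1) ('i ^+ (alpha n k m != alpha n k m.-1))^-1)
     * (alpha n j n == alpha n k n)%:R).

Definition psd (N : nat) (A : 'M[algC]_N) : Prop :=
  (forall i j, A j i = (A i j)^*) /\
  (forall x : 'cV[algC]_N, 0 <= ((map_mx (fun z : algC => z^*) x)^T *m A *m x) 0 0).

From HB Require Import structures.
From mathcomp Require Import all_boot all_order all_algebra.
From mathcomp Require Import algC zify ring.
Set Implicit Arguments.
Unset Strict Implicit.
Unset Printing Implicit Defensive.

Import Order.TTheory GRing.Theory Num.Theory.
Local Open Scope ring_scope.

(* Since i^c (i^d)^-1 = i^c (i^d)^*, the matrix D^n is 2^-n times the Gram
   matrix of the two vectors v_p(j) = [alpha_n(j) = p] i^(c_n(j)), p = 0, 1;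
   hence it is positive semi-definite and its entry formula reduces to
   i^(c - d) = +-1 for c = d mod 2.  The total sum is 2^-n (|S_0|^2 + |S_1|^2)
   with S_p the sum of the entries of v_p; splitting off the last step of a
   path gives S_p(n+1) = S_p(n) + i S_(1-p)(n), which doubles |S_0|^2 + |S_1|^2. *)

Section GramMatrix.

Variables (N : nat) (I : finType) (c : algC) (a : I -> 'I_N -> algC).

Definition gram_mx : 'M[algC]_N :=
  \matrix_(j, k) (c * \sum_(p : I) a p j * (a p k)^*).

Lemma gram_mx_bilinear (x y : 'I_N -> algC) :
  \sum_j \sum_k x j * gram_mx j k * y k
  = c * \sum_(p : I) (\sum_j x j * a p j) * (\sum_k (a p k)^* * y k).
Proof.
symmetry; rewrite mulr_sumr.
under eq_bigr => p _ do rewrite big_distrlr mulr_sumr.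
under eq_bigr => p _ do under eq_bigr => j _ do rewrite mulr_sumr.
rewrite exchange_big; apply: eq_bigr => j _.
rewrite exchange_big; apply: eq_bigr => k _.
rewrite mxE 2!mulr_sumr mulr_suml; apply: eq_bigr => p _ /=.
by set v := (a p k)^*; ring.
Qed.

Lemma gram_mx_sum :
  \sum_j \sum_k gram_mx j k
  = c * \sum_(p : I) (\sum_j a p j) * (\sum_j a p j)^*.
Proof.
transitivity (\sum_j \sum_k 1 * gram_mx j k * 1).
  by apply: eq_bigr => j _; apply: eq_bigr => k _; rewrite mul1r mulr1.
rewrite gram_mx_bilinear; congr (_ * _); apply: eq_bigr => p _.
by rewrite rmorph_sum; congr (_ * _); apply: eq_bigr => j _; rewrite ?mul1r ?mulr1.
Qed.

Hypothesis c_ge0 : 0 <= c.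

Lemma gram_mx_psd : psd gram_mx.
Proof.
split=> [j k | x].
  rewrite !mxE rmorphM /= geC0_conj // rmorph_sum; congr (_ * _).
  by apply: eq_bigr => p _; rewrite rmorphM /= conjCK mulrC.
have -> : ((map_mx (fun z : algC => z^*) x)^T *m gram_mx *m x) 0 0 =
    \sum_j \sum_k (x j 0)^* * gram_mx j k * x k 0.
  rewrite mxE; under eq_bigr => k _ do rewrite mxE mulr_suml.
  rewrite exchange_big; apply: eq_bigr => j _; apply: eq_bigr => k _.
  by rewrite !mxE.
rewrite gram_mx_bilinear; apply: mulr_ge0 => //; apply: sumr_ge0 => p _.
set z := \sum_j _; have -> : \sum_k (a p k)^* * x k 0 = z^*.
  by rewrite rmorph_sum; apply: eq_bigr => k _; rewrite rmorphM /= conjCK mulrC.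
exact: mul_conjC_ge0.
Qed.

End GramMatrix.

Lemma conjCi_expr c : (('i ^+ c)^* : algC) = ('i ^+ c)^-1.
Proof. by rewrite invC_norm normrX normCi !expr1n invr1 mul1r. Qed.

Lemma expCi_modn c : ('i ^+ c : algC) = 'i ^+ (c %% 4).
Proof.
have expCi4 : ('i ^+ 4 : algC) = 1 by rewrite (exprM _ 2 2) sqrCi sqrrN expr1n.
by rewrite {1}(divn_eq c 4) exprD mulnC exprM expCi4 expr1n mul1r.
Qed.

Lemma divr_expCi_eqmod c d : c = d %[mod 4] -> ('i ^+ c : algC) / 'i ^+ d = 1.
Proof. by move=> cd; rewrite expCi_modn cd -expCi_modn divff // expf_neq0 ?neq0Ci. Qed.

Lemma divr_expCi_neqmod c d : odd c = odd d -> c <> d %[mod 4] ->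
  ('i ^+ c : algC) / 'i ^+ d = -1.
Proof.
move=> cd_odd cd_neq; have cd2 : (c %% 4 = (d + 2) %% 4)%N.
  by have := modn2 c; have := modn2 d; rewrite cd_odd; lia.
by rewrite expCi_modn cd2 -expCi_modn exprD sqrCi mulrN1 mulNr divff // expf_neq0 ?neq0Ci.
Qed.

Lemma alpha_last n j : alpha n j n = odd j.
Proof. by rewrite /alpha subnn expn0 divn1. Qed.

Lemma alphaS_half n j k : (k <= n)%N -> alpha n.+1 j k = alpha n j./2 k.
Proof. by move=> le_kn; rewrite /alpha subSn // expnS divnMA divn2. Qed.

Lemma cn0 j : cn 0 j = 0%N.
Proof. by rewrite /cn big_geq. Qed.

Lemma cnS n j : cn n.+1 j = (cn n j./2 + (odd j./2 != odd j))%N.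
Proof.
rewrite /cn big_nat_recr //= alpha_last alphaS_half // alpha_last eq_sym.
congr (_ + _)%N; apply: eq_big_nat => k /andP [k_gt0 k_le].
by rewrite !alphaS_half //; lia.
Qed.

Lemma odd_cn n j : (j < 2 ^ n)%N -> odd (cn n j) = odd j.
Proof.
elim: n j => [|n IHn] j lt_j; first by rewrite cn0; case: j lt_j.
rewrite cnS oddD IHn; last by rewrite -divn2 ltn_divLR // -expnSr.
by case: (odd j./2); case: (odd j).
Qed.

Lemma Dmx_entry n (j k : 'I_(2 ^ n)) : Dmx n j k =
  (2 ^+ n)^-1 * 'i ^+ cn n j * ('i ^+ cn n k)^-1 * (odd j == odd k)%:R.
Proof. by rewrite mxE prodfV !prodrXr !alpha_last. Qed.

Definition path_amp n (p : bool) (j : nat) : algC :=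
  (odd j == p)%:R * 'i ^+ cn n j.

Lemma Dmx_gram n :
  Dmx n = gram_mx (2 ^+ n)^-1 (fun p (j : 'I_(2 ^ n)) => path_amp n p j).
Proof.
apply/matrixP => j k; rewrite Dmx_entry mxE big_bool /path_amp.
rewrite !rmorphM /= !rmorph_nat conjCi_expr.
by case: (odd j); case: (odd k); rewrite /= ?mulr0 ?mulr1 ?mul0r ?mul1r; ring.
Qed.

Lemma sum_ord_double (R : nmodType) m (F : nat -> R) :
  \sum_(j < m.*2) F j = \sum_(j < m) (F j.*2 + F j.*2.+1).
Proof.
elim: m => [|m IHm]; first by rewrite !big_ord0.
by rewrite doubleS !big_ord_recr /= IHm addrA.
Qed.

Definition amp_sum n p : algC := \sum_(j < 2 ^ n) path_amp n p j.

Lemma amp_sum0 p : amp_sum 0 p = (~~ p)%:R.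
Proof. by rewrite /amp_sum big_ord1 /path_amp cn0 mulr1; case: p. Qed.

Lemma amp_sumS n p : amp_sum n.+1 p = amp_sum n p + 'i * amp_sum n (~~ p).
Proof.
rewrite /amp_sum expnS mul2n sum_ord_double mulr_sumr -big_split.
apply: eq_bigr => j _.
rewrite /path_amp !cnS /= !odd_double half_double uphalf_double /=.
by case: p; case: (odd j); rewrite /= ?addn0 ?addn1 ?exprS; ring.
Qed.

Lemma amp_sum_norm n :
  \sum_(p : bool) amp_sum n p * (amp_sum n p)^* = 2 ^+ n.
Proof.
rewrite big_bool /=; elim: n => [|n IHn].
  by rewrite !amp_sum0 /= !rmorph_nat mul0r add0r mulr1.
rewrite !amp_sumS /= !rmorphD !rmorphM /= conjCi exprS -IHn.
set a := amp_sum n true; set b := amp_sum n false.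
transitivity ((1 - 'i ^+ 2) * (a * a^* + b * b^*)); first ring.
by rewrite sqrCi opprK.
Qed.

Theorem theorem2p1 (n : nat) (hn : (1 <= n)%N) :
  psd (Dmx n) /\
  (forall j k : 'I_(2 ^ n),
     (odd j != odd k -> Dmx n j k = 0) /\
     (odd j = odd k ->
        (cn n j = cn n k %[mod 4] -> Dmx n j k = (2 ^+ n)^-1) /\
        (cn n j <> cn n k %[mod 4] -> Dmx n j k = - (2 ^+ n)^-1))) /\
  \sum_(j < 2 ^ n) \sum_(k < 2 ^ n) Dmx n j k = 1.
Proof.
have pos2n : (0 : algC) < 2 ^+ n by rewrite exprn_gt0 ?ltr0n.
split; [|split].
- by rewrite Dmx_gram; apply: gram_mx_psd; rewrite invr_ge0 ltW.
- move=> j k; rewrite Dmx_entry; split=> [/negbTE -> | jk_odd]; first by rewrite mulr0.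
  have cn_odd : odd (cn n j) = odd (cn n k) by rewrite !odd_cn.
  rewrite jk_odd eqxx mulr1 -mulrA.
  by split=> [/divr_expCi_eqmod | /(divr_expCi_neqmod cn_odd)] ->;
    rewrite ?mulr1 ?mulrN1.
- by rewrite Dmx_gram gram_mx_sum amp_sum_norm mulVf // gt_eqF.
Qed.
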